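(* Let $u:\mathbb{R}^n\supseteq\bigcup_{l}P_l\to\mathbb{R}^m$ be a continuous piecewise affine function with $u(z)=F_lz+G_l$ for $z\in P_l$, $l=1,\dots,n_r$, where $F_l\in\mathbb{R}^{m\times n}$, $G_l\in\mathbb{R}^m$ and $P_l=\{z\in\mathbb{R}^n: H_lz\le K_l\}$ are polyhedra. Let $i\neq j$ and let the hyperplane $hz=k$ ($h\in\mathbb{R}^{1\times n}\setminus\{0\}$, $k\in\mathbb{R}$) border $P_i$ and $P_j$, with $hz\le k$ for $z\in P_j$ and $hz\ge k$ for $z\in P_i$. Let $\epsilon\ge0$ and let the quantized data be $\hat F_i=F_i+\Delta F_i$, $\hat G_i=G_i+\Delta G_i$, $\hat h=h+\Delta h$, $\hat k=k+\Delta k$, $\hat x=x+\Delta x$, where every entry of $\Delta F_i,\Delta G_i,\Delta h,\Delta k,\Delta x$ has absolute value at most $\epsilon$. Let $x\in P_j$, suppose the orthogonal projection $x_p$ of $x$ onto the hyperplane $\{z:hz=k\}$ lies in $P_i\cap P_j$ (the common facet), and suppose $\hat h\hat x\ge\hat k$ (the quantized state lies on the $\hat P_i$ side of the quantized hyperplane), with the quantized control given by $\hat u(\hat x)=\hat F_i\hat x+\hat G_i$. Then, with $\delta=\epsilon(\|h\|_1+\|x\|_1+n\epsilon+1)$, $$\|\hat u(\hat x)-u(x)\|_\infty\le \frac{\delta}{\|h\|_2^2}\,\|(F_i-F_j)h'\|_\infty+\|F_i\Delta x+\Delta F_ix+\Delta F_i\Delta x+\Delta G_i\|_\infty,$$ and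 moreover $$\|F_i\Delta x+\Delta F_ix+\Delta F_i\Delta x+\Delta G_i\|_\infty\le \|\Delta F_i\|_\infty\|x\|_\infty+\|\Delta G_i\|_\infty+\|\hat F_i\|_\infty\,\epsilon \quad\text{(a posteriori bound)},$$ as well as $$\|F_i\Delta x+\Delta F_ix+\Delta F_i\Delta x+\Delta G_i\|_\infty\le \epsilon\left(\|F_i\|_\infty+n\|x\|_\infty+n\epsilon+1\right)\quad\text{(a priori bound)}.$$
   Context: $h'$ denotes the transpose of $h$. For vectors, $\|\cdot\|_1,\|\cdot\|_2,\|\cdot\|_\infty$ are the usual $1$-, $2$-, $\infty$-norms; for a matrix $M$, $\|M\|_\infty$ is the induced $\infty$-norm (maximum absolute row sum). Here $u(x)=F_jx+G_j$ is the exact control (explicit MPC feedback law) at the true state $x\in P_j$, and $\hat u(\hat x)$ is the control computed by the controller from quantized data, in which the quantized state is located in the quantized region $\hat P_i$. Continuity of $u$ means $F_iz+G_i=F_jz+G_j$ for all $z\in P_i\cap P_j$. *)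

From HB Require Import structures.
From mathcomp Require Import all_boot all_order all_algebra.
Set Implicit Arguments. Unset Strict Implicit. Unset Printing Implicit Defensive.
Import Order.TTheory GRing.Theory Num.Theory.
Local Open Scope ring_scope.

Definition vnorm1 {R : realFieldType} {n : nat} (v : 'cV[R]_n) : R :=
  \sum_(i < n) `|v i 0|.
Definition rnorm1 {R : realFieldType} {n : nat} (v : 'rV[R]_n) : R :=
  \sum_(j < n) `|v 0 j|.
(* infinity-norm of a column vector (max abs entry; 0 for the empty vector) *)
Definition vnormInf {R : realFieldType} {n : nat} (v : 'cV[R]_n) : R :=
  \big[Num.max/0]_(i < n) `|v i 0|.
(* induced infinity-norm of a matrix: maximum absolute row sum *)
Definition mnormInf {R : realFieldType} {m n : nat} (M : 'M[R]_(m, n)) : R :=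
  \big[Num.max/0]_(i < m) \sum_(j < n) `|M i j|.
Definition rnorm2sq {R : realFieldType} {n : nat} (h : 'rV[R]_n) : R :=
  \sum_(j < n) h 0 j ^+ 2.

Definition dotrc {R : realFieldType} {n : nat} (h : 'rV[R]_n) (z : 'cV[R]_n) : R :=
  (h *m z) 0 0.

Definition in_poly {R : realFieldType} {n p : nat}
  (H : 'M[R]_(p, n)) (K : 'cV[R]_p) (z : 'cV[R]_n) : Prop :=
  forall r : 'I_p, (H *m z) r 0 <= K r 0.

Definition proj_hyp {R : realFieldType} {n : nat}
  (h : 'rV[R]_n) (k : R) (x : 'cV[R]_n) : 'cV[R]_n :=
  x - ((dotrc h x - k) / rnorm2sq h) *: h^T.

From HB Require Import structures.
From mathcomp Require Import all_boot all_order all_algebra.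
From mathcomp Require Import ring lra.
Import Order.TTheory GRing.Theory Num.Theory.
Local Open Scope ring_scope.
Set Implicit Arguments.
Unset Strict Implicit.

(* Write x = x_p + c h' with c = (h x - k) / |h|_2^2.  Continuity of u at the
   facet point x_p makes the two affine pieces differ at x by exactly
   c (F_i - F_j) h', and the quantized control differs from the i-th piece by
   the error E.  Since h x <= k while the perturbed test says the opposite,
   k - h x is at most the perturbation of that test, which bounds |c| by
   delta / |h|_2^2.  The two bounds on E are triangle inequalities for the
   induced infinity-norm. *)

Section Norms.
Context {R : realFieldType}.

Lemma vnormInf_ge0 n (v : 'cV[R]_n) : 0 <= vnormInf v.
Proof. by apply: (big_ind (fun y => 0 <= y)) => // a b a0 _; rewrite le_max a0. Qed.

Lemma mnormInf_ge0 m n (M : 'M[R]_(m, n)) : 0 <= mnormInf M.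
Proof.
apply: (big_ind (fun y => 0 <= y)) => // [a b a0 _|a _]; first by rewrite le_max a0.
exact: sumr_ge0.
Qed.

Lemma ler_vnormInf n (v : 'cV[R]_n) a : `|v a 0| <= vnormInf v.
Proof. by rewrite /vnormInf (bigD1 a) //= le_max lexx. Qed.

Lemma ler_row_mnormInf m n (M : 'M[R]_(m, n)) a : \sum_j `|M a j| <= mnormInf M.
Proof. by rewrite /mnormInf (bigD1 a) //= le_max lexx. Qed.

Lemma vnormInf_le n (v : 'cV[R]_n) c :
  0 <= c -> (forall a, `|v a 0| <= c) -> vnormInf v <= c.
Proof. by move=> c0 hv; apply: (big_ind (fun y => y <= c)) => // *; rewrite ge_max; apply/andP. Qed.

Lemma vnormInfD n (v w : 'cV[R]_n) : vnormInf (v + w) <= vnormInf v + vnormInf w.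
Proof.
apply: vnormInf_le => [|a]; first by rewrite addr_ge0 ?vnormInf_ge0.
by rewrite mxE (le_trans (ler_normD _ _)) // lerD ?ler_vnormInf.
Qed.

Lemma vnormInfZ n (c : R) (v : 'cV[R]_n) : vnormInf (c *: v) <= `|c| * vnormInf v.
Proof.
apply: vnormInf_le => [|a]; first by rewrite mulr_ge0 ?vnormInf_ge0.
by rewrite mxE normrM ler_wpM2l ?ler_vnormInf.
Qed.

Lemma vnormInf_mulmx m n (M : 'M[R]_(m, n)) (v : 'cV[R]_n) :
  vnormInf (M *m v) <= mnormInf M * vnormInf v.
Proof.
apply: vnormInf_le => [|a]; first by rewrite mulr_ge0 ?vnormInf_ge0 ?mnormInf_ge0.
rewrite mxE (le_trans (ler_norm_sum _ _ _)) //.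
apply: (@le_trans _ _ ((\sum_j `|M a j|) * vnormInf v)).
  by rewrite mulr_suml ler_sum // => j _; rewrite normrM ler_wpM2l ?ler_vnormInf.
by rewrite ler_wpM2r ?vnormInf_ge0 ?ler_row_mnormInf.
Qed.

Lemma mnormInf_le_entries m n (M : 'M[R]_(m, n)) e :
  0 <= e -> (forall a b, `|M a b| <= e) -> mnormInf M <= n%:R * e.
Proof.
move=> e0 hM; apply: (big_ind (fun y => y <= n%:R * e)) => [|*|a _].
- by rewrite mulr_ge0 ?ler0n.
- by rewrite ge_max; apply/andP.
by rewrite (le_trans (ler_sum _ (fun j _ => hM a j))) // sumr_const card_ord mulr_natl.
Qed.

Lemma rnorm1_le_entries n (h : 'rV[R]_n) e :
  (forall b, `|h 0 b| <= e) -> rnorm1 h <= n%:R * e.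
Proof.
by move=> hh; rewrite (le_trans (ler_sum _ (fun j _ => hh j))) // sumr_const card_ord mulr_natl.
Qed.

Lemma rnorm2sq_gt0 n (h : 'rV[R]_n) : h != 0 -> 0 < rnorm2sq h.
Proof.
move=> h_neq0; rewrite lt_def sumr_ge0 ?andbT => [|j _]; last exact: sqr_ge0.
apply: contra h_neq0 => /eqP/psumr_eq0P h0; apply/eqP/matrixP => a b.
by rewrite ord1 mxE; apply/eqP; rewrite -sqrf_eq0 h0 // => j _; apply: sqr_ge0.
Qed.

Lemma dotrcDl n (h1 h2 : 'rV[R]_n) (v : 'cV[R]_n) :
  dotrc (h1 + h2) v = dotrc h1 v + dotrc h2 v.
Proof. by rewrite /dotrc mulmxDl mxE. Qed.

Lemma dotrcDr n (h : 'rV[R]_n) (v w : 'cV[R]_n) :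
  dotrc h (v + w) = dotrc h v + dotrc h w.
Proof. by rewrite /dotrc mulmxDr mxE. Qed.

Lemma norm_dotrc_le_rnorm1 n (h : 'rV[R]_n) (v : 'cV[R]_n) e :
  (forall b, `|v b 0| <= e) -> `|dotrc h v| <= rnorm1 h * e.
Proof.
move=> hv; rewrite /dotrc mxE mulr_suml (le_trans (ler_norm_sum _ _ _)) //.
by apply: ler_sum => b _; rewrite normrM ler_wpM2l.
Qed.

Lemma norm_dotrc_le_vnorm1 n (h : 'rV[R]_n) (v : 'cV[R]_n) e :
  (forall b, `|h 0 b| <= e) -> `|dotrc h v| <= e * vnorm1 v.
Proof.
move=> hh; rewrite /dotrc mxE mulr_sumr (le_trans (ler_norm_sum _ _ _)) //.
by apply: ler_sum => b _; rewrite normrM ler_wpM2r.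
Qed.

End Norms.

Section Quantization.
Context {R : realFieldType} {m n : nat}.

Lemma affine_jump_along (Fi Fj : 'M[R]_(m, n)) (Gi Gj : 'cV[R]_m)
    (xp w : 'cV[R]_n) (c : R) :
  Fi *m xp + Gi = Fj *m xp + Gj ->
  Fi *m (xp + c *: w) + Gi - (Fj *m (xp + c *: w) + Gj) = c *: ((Fi - Fj) *m w).
Proof.
move=> hxp; rewrite !mulmxDr -!scalemxAr mulmxBl scalerBr.
by rewrite [Fi *m xp + _ + _]addrAC [Fj *m xp + _ + _]addrAC hxp addrC addrKA.
Qed.

Lemma quantized_affine_error (F dF : 'M[R]_(m, n)) (G dG : 'cV[R]_m)
    (x dx : 'cV[R]_n) :
  (F + dF) *m (x + dx) + (G + dG) - (F *m x + G) =
  F *m dx + dF *m x + dF *m dx + dG.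
Proof.
rewrite mulmxDl !mulmxDr; apply/matrixP => a b; rewrite !mxE; ring.
Qed.

Lemma quantized_affine_errorE (F dF : 'M[R]_(m, n)) (dG : 'cV[R]_m)
    (x dx : 'cV[R]_n) :
  F *m dx + dF *m x + dF *m dx + dG = (F + dF) *m dx + dF *m x + dG.
Proof. by rewrite mulmxDl [F *m dx + _ + _]addrAC. Qed.

Lemma quantized_affine_error_aposteriori (F dF : 'M[R]_(m, n)) (dG : 'cV[R]_m)
    (x dx : 'cV[R]_n) (eps : R) :
  vnormInf dx <= eps ->
  vnormInf (F *m dx + dF *m x + dF *m dx + dG) <=
  mnormInf dF * vnormInf x + vnormInf dG + mnormInf (F + dF) * eps.
Proof.
move=> dx_le; rewrite quantized_affine_errorE.
have tri : vnormInf ((F + dF) *m dx + dF *m x + dG) <=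
    vnormInf ((F + dF) *m dx) + vnormInf (dF *m x) + vnormInf dG.
  by rewrite (le_trans (vnormInfD _ _)) // lerD2r vnormInfD.
have Fdx := le_trans (vnormInf_mulmx (F + dF) dx) (ler_wpM2l (mnormInf_ge0 _) dx_le).
have dFx := vnormInf_mulmx dF x.
lra.
Qed.

Lemma quantized_affine_error_apriori (F dF : 'M[R]_(m, n)) (dG : 'cV[R]_m)
    (x dx : 'cV[R]_n) (eps : R) :
  0 <= eps -> (forall a b, `|dF a b| <= eps) -> (forall a, `|dG a 0| <= eps) ->
  (forall b, `|dx b 0| <= eps) ->
  vnormInf (F *m dx + dF *m x + dF *m dx + dG) <=
  eps * (mnormInf F + n%:R * vnormInf x + n%:R * eps + 1).
Proof.
move=> eps0 hdF hdG hdx.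
have dx_le := vnormInf_le eps0 hdx.
have dF_le := mnormInf_le_entries eps0 hdF.
have dG_le := vnormInf_le eps0 hdG.
have tri : vnormInf (F *m dx + dF *m x + dF *m dx + dG) <=
    vnormInf (F *m dx) + vnormInf (dF *m x) + vnormInf (dF *m dx) + vnormInf dG.
  by rewrite (le_trans (vnormInfD _ _)) // lerD2r (le_trans (vnormInfD _ _)) // lerD2r vnormInfD.
have Fdx := le_trans (vnormInf_mulmx F dx) (ler_wpM2l (mnormInf_ge0 F) dx_le).
have dFx := le_trans (vnormInf_mulmx dF x) (ler_wpM2r (vnormInf_ge0 x) dF_le).
have dFdx := le_trans (vnormInf_mulmx dF dx)
  (ler_pM (mnormInf_ge0 dF) (vnormInf_ge0 dx) dF_le dx_le).
lra.
Qed.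

Lemma quantized_side_residual_le (h dh : 'rV[R]_n) (x dx : 'cV[R]_n) (k dk eps : R) :
  0 <= eps -> (forall b, `|dh 0 b| <= eps) -> `|dk| <= eps ->
  (forall b, `|dx b 0| <= eps) ->
  dotrc h x <= k -> k + dk <= dotrc (h + dh) (x + dx) ->
  `|dotrc h x - k| <= eps * (rnorm1 h + vnorm1 x + n%:R * eps + 1).
Proof.
move=> eps0 hdh hdk hdx hxk hside.
have h_dx := norm_dotrc_le_rnorm1 h hdx.
have dh_x := norm_dotrc_le_vnorm1 x hdh.
have dh_dx : `|dotrc dh dx| <= n%:R * eps * eps.
  exact: le_trans (norm_dotrc_le_rnorm1 dh hdx) (ler_wpM2r eps0 (rnorm1_le_entries hdh)).
rewrite dotrcDl !dotrcDr in hside.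
rewrite ler0_norm ?subr_le0 //.
have := ler_norm (dotrc h dx); have := ler_norm (dotrc dh x).
have := ler_norm (dotrc dh dx); have := ler_norm (- dk); rewrite normrN.
lra.
Qed.

End Quantization.

Theorem theorem1 (R : realFieldType) (n m nr : nat)
  (p : 'I_nr -> nat)
  (H : forall l : 'I_nr, 'M[R]_(p l, n)) (K : forall l : 'I_nr, 'cV[R]_(p l))
  (F : 'I_nr -> 'M[R]_(m, n)) (G : 'I_nr -> 'cV[R]_m)
  (u : 'cV[R]_n -> 'cV[R]_m)
  (hu : forall (l : 'I_nr) (z : 'cV[R]_n), in_poly (H l) (K l) z ->
          u z = F l *m z + G l)
  (hcont : forall (l1 l2 : 'I_nr) (z : 'cV[R]_n),
          in_poly (H l1) (K l1) z -> in_poly (H l2) (K l2) z ->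
          F l1 *m z + G l1 = F l2 *m z + G l2)
  (i j : 'I_nr) (hij : i != j)
  (h : 'rV[R]_n) (k : R) (hh0 : h != 0)
  (hPj : forall z, in_poly (H j) (K j) z -> dotrc h z <= k)
  (hPi : forall z, in_poly (H i) (K i) z -> k <= dotrc h z)
  (eps : R) (heps : 0 <= eps)
  (dF : 'M[R]_(m, n)) (dG : 'cV[R]_m) (dh : 'rV[R]_n) (dk : R) (dx : 'cV[R]_n)
  (hdF : forall a b, `|dF a b| <= eps) (hdG : forall a, `|dG a 0| <= eps)
  (hdh : forall b, `|dh 0 b| <= eps) (hdk : `|dk| <= eps)
  (hdx : forall b, `|dx b 0| <= eps)
  (x : 'cV[R]_n) (hx : in_poly (H j) (K j) x)
  (hxpi : in_poly (H i) (K i) (proj_hyp h k x))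
  (hxpj : in_poly (H j) (K j) (proj_hyp h k x))
  (hside : k + dk <= dotrc (h + dh) (x + dx)) :
  let Fhat := F i + dF in
  let Ghat := G i + dG in
  let xhat := x + dx in
  let uhat := Fhat *m xhat + Ghat in
  let delta := eps * (rnorm1 h + vnorm1 x + n%:R * eps + 1) in
  let E := F i *m dx + dF *m x + dF *m dx + dG in
  [/\ vnormInf (uhat - u x) <=
        delta / rnorm2sq h * vnormInf ((F i - F j) *m h^T) + vnormInf E,
      vnormInf E <= mnormInf dF * vnormInf x + vnormInf dG + mnormInf Fhat * eps
    & vnormInf E <= eps * (mnormInf (F i) + n%:R * vnormInf x + n%:R * eps + 1)].
Proof.
move=> Fhat Ghat xhat uhat delta E.
set c := (dotrc h x - k) / rnorm2sq h.
have x_split : x = proj_hyp h k x + c *: h^T by rewrite /proj_hyp subrK.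
have jump : F i *m x + G i - (F j *m x + G j) = c *: ((F i - F j) *m h^T).
  by rewrite {1 2}x_split; apply/affine_jump_along/hcont.
have err : uhat - u x = c *: ((F i - F j) *m h^T) + E.
  by rewrite (hu j x hx) -(subrKA (F i *m x + G i)) quantized_affine_error jump addrC.
have c_le : `|c| <= delta / rnorm2sq h.
  have h2_gt0 := rnorm2sq_gt0 hh0.
  rewrite normrM normfV (gtr0_norm h2_gt0) ler_pM2r ?invr_gt0 //.
  exact: quantized_side_residual_le heps hdh hdk hdx (hPj x hx) hside.
split.
- rewrite err; apply: le_trans (vnormInfD _ _) _; rewrite lerD2r.
  exact: le_trans (vnormInfZ _ _) (ler_wpM2r (vnormInf_ge0 _) c_le).
- exact: quantized_affine_error_aposteriori (vnormInf_le heps hdx).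
- exact: quantized_affine_error_apriori.
Qed.
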